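(* Let $f:\mathbb{R}^n\to\mathbb{R}$ be continuously differentiable and bounded below with $\nabla f$ Lipschitz continuous on $\mathbb{R}^n$, let $s$ be an integer with $0<s<n$, and let $\{\mathbf{x}^k\}$ be the sequence generated by the partial sparse-simplex method. Then for any $k$ with $\|\mathbf{x}^k\|_0<s$, $$f(\mathbf{x}^k)-f(\mathbf{x}^{k+1})\ge\frac{1}{2L_2(f)}\max_{i=1,\dots,n}(\nabla_i f(\mathbf{x}^k))^2,$$ and for any $k$ with $\|\mathbf{x}^k\|_0=s$, $f(\mathbf{x}^k)-f(\mathbf{x}^{k+1})\ge A(\mathbf{x}^k)$, where $$A(\mathbf{x})=\max\Big\{\frac{1}{2L_2(f)}\max_{i\in I_1(\mathbf{x})}(\nabla_i f(\mathbf{x}))^2,\ M_s(\mathbf{x})\Big[\max_{i\in I_0(\mathbf{x})}|\nabla_i f(\mathbf{x})|-\max_{i\in I_1(\mathbf{x})}|\nabla_i f(\mathbf{x})|-L_2(f)M_s(\mathbf{x})\Big]\Big\}.$$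
   Context: $\|\mathbf{x}\|_0$ is the number of nonzero components, $C_s=\{\mathbf{x}:\|\mathbf{x}\|_0\le s\}$, $I_1(\mathbf{x})=\{i:x_i\neq0\}$, $I_0(\mathbf{x})=\{i:x_i=0\}$, $M_s(\mathbf{x})$ the $s$-th largest absolute value among components of $\mathbf{x}$, $\mathbf{e}_i$ the $i$-th standard basis vector. For $i\neq j$, $\nabla_{i,j}f(\mathbf{x})\in\mathbb{R}^2$ is the vector of the $i$-th and $j$-th partial derivatives, $L_{i,j}(f)$ is a constant with $\|\nabla_{i,j}f(\mathbf{x})-\nabla_{i,j}f(\mathbf{x}+\mathbf{d})\|\le L_{i,j}(f)\|\mathbf{d}\|$ for all $\mathbf{x}$ and all $\mathbf{d}$ with at most two nonzero components, and $L_2(f)=\max_{i\neq j}L_{i,j}(f)$. Partial sparse-simplex method (all one-dimensional minima assumed attained): choose $\mathbf{x}^0\in C_s$. At step $k$: if $\|\mathbf{x}^k\|_0<s$, for each $i$ let $t_i\in\operatorname{argmin}_t f(\mathbf{x}^k+t\mathbf{e}_i)$, $f_i=\min_t f(\mathbf{x}^k+t\mathbf{e}_i)$, $i_k\in\operatorname{argmin}_i f_i$; if $f_{i_k}<f(\mathbf{x}^k)$ set $\mathbf{x}^{k+1}=\mathbf{x}^k+t_{i_k}\mathbf{e}_{i_k}$, else stop. If $\|\mathbf{x}^k\|_0=s$: for $i\in I_1(\mathbf{x}^k)$ let $f_i=\min_t f(\mathbf{x}^k+t\mathbf{e}_i)$; let $i_k^1\in\operatorname{argmin}\{f_i:i\in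 I_1(\mathbf{x}^k)\}$, $i_k^2\in\operatorname{argmax}\{|\nabla_i f(\mathbf{x}^k)|:i\in I_0(\mathbf{x}^k)\}$, $m_k\in\operatorname{argmin}\{|x_i^k|:i\in I_1(\mathbf{x}^k)\}$; let $D_k^1=\min_t f(\mathbf{x}^k+t\mathbf{e}_{i_k^1})$ with minimizer $T_k^1$, and $D_k^2=\min_t f(\mathbf{x}^k-x^k_{m_k}\mathbf{e}_{m_k}+t\mathbf{e}_{i_k^2})$ with minimizer $T_k^2$; if $D_k^1<D_k^2$ set $\mathbf{x}^{k+1}=\mathbf{x}^k+T_k^1\mathbf{e}_{i_k^1}$, else $\mathbf{x}^{k+1}=\mathbf{x}^k-x^k_{m_k}\mathbf{e}_{m_k}+T_k^2\mathbf{e}_{i_k^2}$. *)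

From HB Require Import structures.
From mathcomp Require Import all_boot all_order all_algebra.
From mathcomp Require Import all_classical all_reals all_analysis.
Set Implicit Arguments. Unset Strict Implicit. Unset Printing Implicit Defensive.
Import Order.TTheory GRing.Theory Num.Theory.
Import numFieldNormedType.Exports.
Local Open Scope ring_scope.

Section PSS.
Variables (R : realType) (n : nat).
Notation vec := 'rV[R]_n.

Definition ebasis (i : 'I_n) : vec := delta_mx ord0 i.

Definition nnz (x : vec) : nat := #|[set i : 'I_n | x ord0 i != 0]|.
Definition I1 (x : vec) : {set 'I_n} := [set i : 'I_n | x ord0 i != 0].
Definition I0 (x : vec) : {set 'I_n} := [set i : 'I_n | x ord0 i == 0].

Definition Ms (s : nat) (x : vec) : R :=
  nth 0 (sort (fun a b : R => b <= a) [seq `|x ord0 i| | i <- enum 'I_n]) s.-1.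

Definition enorm (d : vec) : R := Num.sqrt (\sum_(i < n) d ord0 i ^+ 2).

Definition partial (f : vec -> R) (i : 'I_n) (x : vec) : R := 'D_(ebasis i) f x.
Definition grad (f : vec -> R) (x : vec) : vec := \row_i partial f i x.

Definition C1 (f : vec -> R) : Prop :=
  (forall x, differentiable f x) /\ (forall i, continuous (partial f i)).

Definition bounded_below (f : vec -> R) : Prop := exists m : R, forall x, m <= f x.

Definition grad_lipschitz (f : vec -> R) : Prop :=
  exists L : R, forall x y, enorm (grad f x - grad f y) <= L * enorm (x - y).

Definition block_lip (f : vec -> R) (i j : 'I_n) (Lij : R) : Prop :=
  forall x d : vec, (nnz d <= 2)%N ->
    Num.sqrt ((partial f i x - partial f i (x + d)) ^+ 2
            + (partial f j x - partial f j (x + d)) ^+ 2) <= Lij * enorm d.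

Definition is_L2 (L : 'I_n -> 'I_n -> R) (L2 : R) : Prop :=
  (forall i j, i != j -> L i j <= L2) /\ (exists i j, i != j /\ L i j = L2).

Definition line_argmin (f : vec -> R) (x : vec) (i : 'I_n) (t : R) : Prop :=
  forall t', f (x + t *: ebasis i) <= f (x + t' *: ebasis i).

(* One step x -> x' of the partial sparse-simplex method (x' exists, i.e. no stop). *)
Definition pss_step (s : nat) (f : vec -> R) (x x' : vec) : Prop :=
  ((nnz x < s)%N /\
    exists (ik : 'I_n) (tk : R),
      line_argmin f x ik tk /\
      (forall (i : 'I_n) (t' : R), f (x + tk *: ebasis ik) <= f (x + t' *: ebasis i)) /\
      f (x + tk *: ebasis ik) < f x /\
      x' = x + tk *: ebasis ik)
  \/
  (nnz x = s /\
    exists (i1 i2 m : 'I_n) (T1 T2 : R),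
      i1 \in I1 x /\ line_argmin f x i1 T1 /\
      (forall i t', i \in I1 x -> f (x + T1 *: ebasis i1) <= f (x + t' *: ebasis i)) /\
      i2 \in I0 x /\ (forall i, i \in I0 x -> `|partial f i x| <= `|partial f i2 x|) /\
      m \in I1 x /\ (forall i, i \in I1 x -> `|x ord0 m| <= `|x ord0 i|) /\
      line_argmin f (x - x ord0 m *: ebasis m) i2 T2 /\
      let D1 := f (x + T1 *: ebasis i1) in
      let D2 := f (x - x ord0 m *: ebasis m + T2 *: ebasis i2) in
      x' = if D1 < D2 then x + T1 *: ebasis i1
           else x - x ord0 m *: ebasis m + T2 *: ebasis i2).

Definition Abound (s : nat) (f : vec -> R) (L2 : R) (x : vec) : R :=
  Num.max
    (1 / (2 * L2) * \big[Num.max/0]_(i in I1 x) (partial f i x) ^+ 2)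
    (Ms s x * (\big[Num.max/0]_(i in I0 x) `|partial f i x|
              - \big[Num.max/0]_(i in I1 x) `|partial f i x|
              - L2 * Ms s x)).

End PSS.

(* Everything rests on the block descent inequality: for a direction d supported on
   two coordinates i <> j, f (x + d) <= f x + <grad_{ij} f x, d> + L_{ij}/2 |d|^2,
   which follows from the mean value theorem and the block Lipschitz bound.  With a
   single coordinate it shows that the exact line search along e_i decreases f by at
   least (grad_i f x)^2 / (2 L_2).  With the coordinate m of smallest nonzero modulus
   M_s(x) and a coordinate j outside the support, the swap x - x_m e_m +- |x_m| e_j,
   signed against grad_j f x, decreases f by at least
   M_s(x) (|grad_j f x| - |grad_m f x| - L_2 M_s(x)).  The step of the method is at
   least as good as each of these candidates. *)

From HB Require Import structures.
From mathcomp Require Import all_boot all_order all_algebra.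
From mathcomp Require Import all_classical all_reals all_analysis.
From mathcomp Require Import ring lra.
Set Implicit Arguments.
Unset Strict Implicit.
Unset Printing Implicit Defensive.

Import Order.TTheory GRing.Theory Num.Theory.
Import numFieldNormedType.Exports.
Local Open Scope ring_scope.

Lemma sorted_ge_nth_gt0 (R : realDomainType) (S : seq R) k :
  sorted (fun a b => b <= a) S -> (0 < nth 0 S k) = (k < count (fun a : R => 0 < a)%R S)%N.
Proof.
move=> srt.
have trS : transitive (fun a b : R => b <= a) by move=> b a c ab bc; exact: le_trans bc ab.
have antitone i j : (i <= j)%N -> (j < size S)%N -> nth 0 S j <= nth 0 S i.
  move=> ij jS; apply: (sorted_leq_nth trS _ 0 srt) => //; rewrite inE //.
  exact: leq_ltn_trans ij jS.
apply/idP/idP => [nth_gt0 | k_lt].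
- have kS : (k < size S)%N.
    by rewrite ltnNge; apply: contraTN nth_gt0 => /(nth_default 0) ->; rewrite ltxx.
  have : all (fun a : R => 0 < a)%R (take k.+1 S).
    apply/(all_nthP 0) => i; rewrite size_takel // => ik; rewrite nth_take // /=.
    exact: lt_le_trans nth_gt0 (antitone i k ik kS).
  rewrite all_count size_takel // => /eqP take_pos.
  by rewrite -(cat_take_drop k.+1 S) count_cat take_pos leq_addr.
- rewrite ltNge; apply: contraTN k_lt => nth_le0; rewrite -leqNgt.
  have drop_pos : count (fun a : R => 0 < a)%R (drop k S) = 0%N.
    apply/eqP; rewrite -leqn0 leqNgt -has_count; apply/negP => /(has_nthP 0) [i].
    rewrite size_drop nth_drop ltn_subRL => iS; apply/negP; rewrite -leNgt.
    by apply: le_trans nth_le0; apply: antitone iS; rewrite leq_addr.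
  rewrite -(cat_take_drop k S) count_cat drop_pos addn0.
  by apply: leq_trans (count_size _ _) _; rewrite size_take_min geq_minl.
Qed.

Lemma count_norm_gt0_nnz (R : realType) n (x : 'rV[R]_n) :
  count (fun a : R => 0 < a)%R [seq `|x ord0 i| | i <- enum 'I_n] = nnz x.
Proof.
rewrite count_map /nnz cardsE cardE /enum_mem size_filter.
by rewrite (@eq_filter _ _ predT) // filter_predT; apply: eq_count => i /=; rewrite normr_gt0.
Qed.

Lemma Ms_min_support (R : realType) n s (x : 'rV[R]_n) m :
  (0 < s)%N -> nnz x = s -> x ord0 m != 0 ->
  (forall i, x ord0 i != 0 -> `|x ord0 m| <= `|x ord0 i|) ->
  Ms s x = `|x ord0 m|.
Proof.
move=> s_gt0 nnz_x xm_neq0 xm_min; rewrite /Ms.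
set S := sort _ _.
have perm_S : perm_eq S [seq `|x ord0 i| | i <- enum 'I_n] by rewrite perm_sort.
have sorted_S : sorted (fun a b : R => b <= a) S.
  by apply: sort_sorted => a b; exact: le_total.
have trS : transitive (fun a b : R => b <= a) by move=> b a c ab bc; exact: le_trans bc ab.
have nth_gt0 k : (0 < nth 0 S k) = (k < s)%N.
  by rewrite sorted_ge_nth_gt0 // (permP perm_S) count_norm_gt0_nnz nnz_x.
have xm_in : `|x ord0 m| \in S by rewrite (perm_mem perm_S); apply: map_f; rewrite mem_enum.
have last_pos : 0 < nth 0 S s.-1 by rewrite nth_gt0 prednK.
apply/eqP; rewrite eq_le; apply/andP; split.
- rewrite -(nth_index 0 xm_in); apply: (sorted_leq_nth trS _ 0 sorted_S) => //.
  + by rewrite inE index_mem.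
  + by rewrite inE; apply: contraLR last_pos; rewrite -leqNgt -leNgt => /(nth_default 0) ->.
  + by rewrite -ltnS prednK // -nth_gt0 nth_index // normr_gt0.
- have : nth 0 S s.-1 \in S.
    apply: mem_nth; rewrite ltnNge; apply: contraTN last_pos.
    by move=> /(nth_default 0) ->; rewrite ltxx.
  rewrite (perm_mem perm_S) => /mapP [i _ Ei]; rewrite Ei in last_pos *.
  by apply: xm_min; rewrite -normr_gt0.
Qed.

Section TwoCoordinates.
Variables (R : realType) (n : nat).
Implicit Types (i j k : 'I_n) (a b : R).

Lemma ebasis2E i j a b k :
  (a *: ebasis R i + b *: ebasis R j) ord0 k = a * (k == i)%:R + b * (k == j)%:R.
Proof. by rewrite !mxE. Qed.

Lemma enorm_ebasis2 i j a b : i != j ->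
  enorm (a *: ebasis R i + b *: ebasis R j) = Num.sqrt (a ^+ 2 + b ^+ 2).
Proof.
move=> ij; rewrite /enorm (bigD1 i) // (bigD1 j) /=; last by rewrite eq_sym.
rewrite big1 => [|k /andP[ki kj]]; last first.
  by rewrite ebasis2E (negbTE ki) (negbTE kj) !mulr0 addr0 expr0n.
by rewrite !ebasis2E !eqxx (negbTE ij) eq_sym (negbTE ij) !mulr1 !mulr0 !addr0 add0r.
Qed.

Lemma nnz_ebasis2 i j a b : (nnz (a *: ebasis R i + b *: ebasis R j) <= 2)%N.
Proof.
apply: leq_trans (_ : #|[set i; j]| <= 2)%N; last by rewrite cards2; case: (i != j).
apply: subset_leq_card; apply/fintype.subsetP => k; rewrite !inE ebasis2E.
by case: (k == i); case: (k == j); rewrite ?mulr0 ?addr0 ?eqxx.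
Qed.

End TwoCoordinates.

Lemma cauchy_schwarz2 (R : rcfType) (a b u v : R) :
  a * u + b * v <= Num.sqrt (a ^+ 2 + b ^+ 2) * Num.sqrt (u ^+ 2 + v ^+ 2).
Proof.
rewrite -sqrtrM ?addr_ge0 ?sqr_ge0 //; apply: le_trans (ler_norm _) _.
rewrite -sqrtr_sqr ler_sqrt ?mulr_ge0 ?addr_ge0 ?sqr_ge0 //.
have := sqr_ge0 (a * v - b * u); nra.
Qed.

Lemma derive_le_affine_increment (R : realType) (phi dphi : R -> R) (a b : R) :
  (forall u : R, is_derive u 1 phi (dphi u)) ->
  (forall u, u \in `]0, 1[ -> dphi u <= a + b * u) ->
  phi 1 <= phi 0 + a + b / 2.
Proof.
move=> dphiP dphi_le.
pose g := phi - (a \*: (id : R -> R) + (b / 2) \*: (id : R -> R) ^+ 2).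
have dg (u : R) : is_derive u 1 g (dphi u - (a + b * u)).
  apply: is_derive_eq (is_deriveB (dphiP u) (is_deriveD (is_deriveZ a (is_derive_id u 1))
    (is_deriveZ (b / 2) (is_deriveX 2 (is_derive_id u 1))))) _.
  change (dphi u - (a * 1 + (b / 2) * ((2 * u ^+ 1) * 1)) = dphi u - (a + b * u)).
  by rewrite !mulr1 expr1 mulrA divfK ?pnatr_eq0.
have g_cont : {within `[0, 1], continuous g}%classic.
  by apply: derivable_within_continuous => u _; have [] := dg u.
have [c c01 g10] := MVT ltr01 (fun u _ => dg u) g_cont.
have : g 1 <= g 0 by rewrite -subr_le0 g10 subr0 mulr1 subr_le0 dphi_le.
change (phi 1 - (a * 1 + b / 2 * 1 ^+ 2) <= phi 0 - (a * 0 + b / 2 * 0 ^+ 2) ->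
        phi 1 <= phi 0 + a + b / 2).
rewrite expr1n expr0n /= !mulr0; lra.
Qed.

Section BlockDescent.
Variables (R : realType) (n : nat) (f : 'rV[R]_n -> R).
Hypothesis f_diff : forall x, differentiable f x.
Implicit Types (i j : 'I_n) (a b : R) (x d : 'rV[R]_n).

Lemma is_derive_line x d (t : R) :
  is_derive t 1 (fun u : R => f (x + u *: d)) ('D_d f (x + t *: d)).
Proof.
have shiftE : (fun h : R => h^-1 *: (((fun u : R => f (x + u *: d)) \o shift t) (h *: 1)
                                     - f (x + t *: d)))
            = (fun h : R => h^-1 *: ((f \o shift (x + t *: d)) (h *: d) - f (x + t *: d))).
  by apply/funext => h /=; rewrite [h *: 1]mulr1 scalerDl addrCA.
by split; rewrite /derivable /derive shiftE //; exact: diff_derivable.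
Qed.

Lemma derive_ebasis2 y i j a b :
  'D_(a *: ebasis R i + b *: ebasis R j) f y = a * partial f i y + b * partial f j y.
Proof. by rewrite /partial !deriveE // linearD !linearZ. Qed.

Lemma block_lip_ge0 i j Lij : i != j -> block_lip f i j Lij -> 0 <= Lij.
Proof.
move=> ij fL; have := fL 0 _ (nnz_ebasis2 i j (1 : R) 0).
rewrite enorm_ebasis2 // expr1n expr0n /= addr0 sqrtr1 mulr1.
exact: le_trans (sqrtr_ge0 _).
Qed.

Lemma block_lip_inner i j Lij x d a b : block_lip f i j Lij -> (nnz d <= 2)%N ->
  a * (partial f i (x + d) - partial f i x) + b * (partial f j (x + d) - partial f j x)
  <= Num.sqrt (a ^+ 2 + b ^+ 2) * (Lij * enorm d).
Proof.
move=> fL d2.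
set ui := partial f i x - partial f i (x + d); set uj := partial f j x - partial f j (x + d).
have -> : a * (partial f i (x + d) - partial f i x) + b * (partial f j (x + d) - partial f j x)
          = - a * ui + - b * uj by rewrite /ui /uj; ring.
apply: le_trans (cauchy_schwarz2 _ _ _ _) _; rewrite !sqrrN.
by rewrite ler_wpM2l ?sqrtr_ge0 ?fL.
Qed.

Lemma block_descent i j Lij x a b : i != j -> block_lip f i j Lij ->
  f (x + (a *: ebasis R i + b *: ebasis R j))
  <= f x + (a * partial f i x + b * partial f j x) + Lij / 2 * (a ^+ 2 + b ^+ 2).
Proof.
move=> ij fL; set d := a *: ebasis R i + b *: ebasis R j.
have deriv_le u : u \in `]0, 1[ -> 'D_d f (x + u *: d)
    <= (a * partial f i x + b * partial f j x) + Lij * (a ^+ 2 + b ^+ 2) * u.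
  rewrite in_itv /= => /andP[/ltW u_ge0 _].
  have ud : u *: d = (u * a) *: ebasis R i + (u * b) *: ebasis R j.
    by rewrite scalerDr !scalerA.
  have norm_ud : enorm (u *: d) = u * Num.sqrt (a ^+ 2 + b ^+ 2).
    rewrite ud enorm_ebasis2 // !exprMn -mulrDr sqrtrM ?sqr_ge0 //.
    by rewrite sqrtr_sqr ger0_norm.
  have := block_lip_inner x a b fL (_ : (nnz (u *: d) <= 2)%N).
  rewrite ud nnz_ebasis2 -ud norm_ud derive_ebasis2 => /(_ isT) inner.
  have bound_eq : Num.sqrt (a ^+ 2 + b ^+ 2) * (Lij * (u * Num.sqrt (a ^+ 2 + b ^+ 2)))
                  = Lij * (a ^+ 2 + b ^+ 2) * u.
    by rewrite -[in RHS](sqr_sqrtr (addr_ge0 (sqr_ge0 a) (sqr_ge0 b))); ring.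
  rewrite bound_eq in inner; lra.
have := derive_le_affine_increment (is_derive_line x d) deriv_le.
rewrite /= scale1r scale0r addr0 => le_f.
by apply: le_trans le_f _; rewrite mulrAC.
Qed.

End BlockDescent.

Lemma mulr_bigmax_le (R : realDomainType) (I : finType) (P : pred I) (F : I -> R)
    (c D : R) :
  0 <= c -> 0 <= D -> (forall i, P i -> c * F i <= D) ->
  c * \big[Num.max/0]_(i | P i) F i <= D.
Proof.
move=> c_ge0 D_ge0 FD.
rewrite (big_morph (fun v => c * v) (fun u v => maxr_pMr u v c_ge0) (mulr0 c)).
by apply: bigmax_le.
Qed.

Section PartialSparseSimplex.
Variables (R : realType) (n : nat) (f : 'rV[R]_n -> R).
Variables (L : 'I_n -> 'I_n -> R) (L2 : R).
Hypothesis f_diff : forall x, differentiable f x.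
Hypothesis fL : forall i j, i != j -> block_lip f i j (L i j).
Hypothesis L2P : is_L2 L L2.
Implicit Types (x y : 'rV[R]_n) (i j m : 'I_n).

Lemma L2_ge0 : 0 <= L2.
Proof. by have [_ [i [j [ij <-]]]] := L2P; exact: block_lip_ge0 (fL ij). Qed.

Lemma coordinate_descent y i t :
  f (y + t *: ebasis R i) <= f y + t * partial f i y + L2 / 2 * t ^+ 2.
Proof.
have [L_le [i0 [j0 [ij0 _]]]] := L2P.
pose j := if i == i0 then j0 else i0.
have ij : i != j by rewrite /j; case: (eqVneq i i0) => [->|].
have := block_descent f_diff y t 0 ij (fL ij).
rewrite scale0r addr0 mul0r addr0 expr0n /= addr0 => /le_trans; apply.
by rewrite lerD2l ler_wpM2r ?sqr_ge0 // ler_pM2r ?invr_gt0 ?ltr0n // L_le.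
Qed.

Lemma coordinate_decrease y i :
  exists t, f (y + t *: ebasis R i) <= f y - 1 / (2 * L2) * partial f i y ^+ 2.
Proof.
(* For [L2 = 0] the claimed decrease is [0], as [1 / 0 = 0]. *)
have [->|L2_neq0] := eqVneq L2 0.
  by exists 0; rewrite mulr0 invr0 mulr0 mul0r subr0 scale0r addr0.
exists (- partial f i y / L2); apply: le_trans (coordinate_descent _ _ _) _.
by rewrite le_eqVlt; apply/orP; left; apply/eqP; field.
Qed.

Lemma swap_decrease y m j : m != j ->
  exists b, f (y - y ord0 m *: ebasis R m + b *: ebasis R j)
    <= f y - `|y ord0 m| * (`|partial f j y| - `|partial f m y| - L2 * `|y ord0 m|).
Proof.
move=> mj; set q := `|y ord0 m|; set gm := partial f m y; set gj := partial f j y.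
pose b := if 0 <= gj then - q else q.
exists b; rewrite -addrA -scaleNr.
have bgj : b * gj = - (q * `|gj|).
  rewrite /b; case: ifP => [gj_ge0|gj_lt0]; first by rewrite ger0_norm // mulNr.
  by rewrite ltr0_norm ?mulrN ?opprK // ltNge gj_lt0.
have ym_gm : - y ord0 m * gm <= q * `|gm|.
  by apply: le_trans (ler_norm _) _; rewrite normrM normrN.
have quad : L m j / 2 * ((- y ord0 m) ^+ 2 + b ^+ 2) <= L2 * (q * q).
  have ym2 : (- y ord0 m) ^+ 2 = q ^+ 2 by rewrite sqrrN real_normK ?num_real.
  have b2 : b ^+ 2 = q ^+ 2 by rewrite /b; case: ifP; rewrite ?sqrrN.
  have -> : L m j / 2 * ((- y ord0 m) ^+ 2 + b ^+ 2) = L m j * (q * q).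
    by rewrite ym2 b2; field.
  rewrite ler_wpM2r ?mulr_ge0 ?normr_ge0 //.
  by case: L2P => L_le _; exact: L_le.
apply: le_trans (block_descent f_diff y _ _ mj (fL mj)) _.
rewrite -/gm bgj; lra.
Qed.

Lemma pss_step_sparse_decrease s x x' : (nnz x < s)%N -> pss_step s f x x' ->
  1 / (2 * L2) * \big[Num.max/0]_(i < n) partial f i x ^+ 2 <= f x - f x'.
Proof.
move=> x_sparse [[_ [ik [tk [_ [tk_min [_ ->]]]]]] | [x_full _]]; last first.
  by rewrite x_full ltnn in x_sparse.
have coord_le i : 1 / (2 * L2) * partial f i x ^+ 2 <= f x - f (x + tk *: ebasis R ik).
  by have [t t_dec] := coordinate_decrease x i; have := tk_min i t; lra.
have c_ge0 : 0 <= 1 / (2 * L2) by rewrite mul1r invr_ge0 mulr_ge0 ?L2_ge0.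
apply: mulr_bigmax_le => [//||i _]; last exact: coord_le.
by apply: le_trans (coord_le ik); rewrite mulr_ge0 ?sqr_ge0.
Qed.

Lemma pss_step_full_decrease s x x' : (0 < s)%N -> nnz x = s -> pss_step s f x x' ->
  Abound s f L2 x <= f x - f x'.
Proof.
move=> s_gt0 x_full [[x_sparse _] | [_ [i1 [i2 [m [T1 [T2 step]]]]]]].
  by rewrite x_full ltnn in x_sparse.
case: step => i1_in [_ [T1_min [i2_in [i2_max [m_in [m_min [T2_min x'E]]]]]]].
rewrite /= in x'E.
set x1 := x + T1 *: ebasis R i1 in x'E; set x2 := _ + T2 *: ebasis R i2 in x'E.
have [le_x1 le_x2] : f x' <= f x1 /\ f x' <= f x2.
  by rewrite x'E; case: ltP => [/ltW|]; split.
have c_ge0 : 0 <= 1 / (2 * L2) by rewrite mul1r invr_ge0 mulr_ge0 ?L2_ge0.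
have coord_le i : i \in I1 x -> 1 / (2 * L2) * partial f i x ^+ 2 <= f x - f x'.
  by move=> i_in; have [t t_dec] := coordinate_decrease x i; have := T1_min i t i_in; lra.
have dec_ge0 : 0 <= f x - f x'.
  by apply: le_trans (coord_le i1 i1_in); rewrite mulr_ge0 ?sqr_ge0.
rewrite /Abound ge_max mulr_bigmax_le //=.
have xm_neq0 : x ord0 m != 0 by rewrite inE in m_in.
have m_i2 : m != i2 by apply: contraNneq xm_neq0 => ->; rewrite inE in i2_in.
rewrite (Ms_min_support s_gt0 x_full xm_neq0); last by move=> i xi; rewrite m_min ?inE.
have [b b_dec] := swap_decrease x m_i2.
apply: le_trans (_ : `|x ord0 m| * (`|partial f i2 x| - `|partial f m x|
                       - L2 * `|x ord0 m|) <= _).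
  rewrite ler_wpM2l // lerD2r lerB //; last exact: le_bigmax_cond.
  by apply: bigmax_le => // i; exact: i2_max.
by have := T2_min b; lra.
Qed.

End PartialSparseSimplex.

Theorem lemma4p1 (R : realType) (n s : nat) (f : 'rV[R]_n -> R)
  (L : 'I_n -> 'I_n -> R) (L2 : R) (x : nat -> 'rV[R]_n) (K : nat) :
  C1 f -> bounded_below f -> grad_lipschitz f ->
  (0 < s)%N -> (s < n)%N ->
  (forall i j : 'I_n, i != j -> block_lip f i j (L i j)) ->
  is_L2 L L2 ->
  (forall (y : 'rV[R]_n) (i : 'I_n), exists t, line_argmin f y i t) ->
  (nnz (x 0%N) <= s)%N ->
  (forall j, (j < K)%N -> pss_step s f (x j) (x j.+1)) ->
  forall k, (k < K)%N ->
    ((nnz (x k) < s)%N ->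
       f (x k) - f (x k.+1) >=
         1 / (2 * L2) * \big[Num.max/0]_(i < n) (partial f i (x k)) ^+ 2) /\
    (nnz (x k) = s ->
       f (x k) - f (x k.+1) >= Abound s f L2 (x k)).
Proof.
move=> [f_diff _] _ _ s_gt0 _ fL L2P _ _ step k k_lt_K; split => [x_sparse | x_full].
- exact: (pss_step_sparse_decrease f_diff fL L2P x_sparse (step k k_lt_K)).
- exact: (pss_step_full_decrease f_diff fL L2P s_gt0 x_full (step k k_lt_K)).
Qed.
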